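(* Let $K\ge 2$, let $\mathcal{X}$ be an instance space, let $\mathcal{D}$ be a joint distribution of $(X,Y)$ on $\mathcal{X}\times[K]$ and $\overline{\mathcal{D}}$ a joint distribution of $(X,\overline{Y})$ on $\mathcal{X}\times[K]$ with the same marginal of $X$, such that $\mathbb{P}(\overline{Y}=\cdot\mid X=x)=\mathbf{T}\,\mathbb{P}(Y=\cdot\mid X=x)$ for all $x$, where $\mathbf{T}$ has $0$ on the diagonal and $\frac{1}{K-1}$ off the diagonal. Let $\mathbf{g}:\mathcal{X}\to\mathbb{R}^K$ be a decision function and $s:\mathbb{R}\to\mathbb{R}_+$ a binary loss with $s(z)+s(-z)=1$ for all $z$. Consider either (OVA) $\ell(k,\mathbf{g}(x))=s(\mathbf{g}_k(x))+\frac{1}{K-1}\sum_{k'\neq k}s(-\mathbf{g}_{k'}(x))$ and $\overline{\ell}_{c}(\overline{k},\mathbf{g}(x))=\frac{1}{K-1}\sum_{k\neq\overline{k}}s(\mathbf{g}_k(x))+s(-\mathbf{g}_{\overline{k}}(x))$; or (PC) $\ell(k,\mathbf{g}(x))=\sum_{k'\neq k}s(\mathbf{g}_k(x)-\mathbf{g}_{k'}(x))$ and $\overline{\ell}_{c}(\overline{k},\mathbf{g}(x))=\sum_{k'\neq\overline{k}}s(\mathbf{g}_{k'}(x)-\mathbf{g}_{\overline{k}}(x))$. Let $\overline{\ell}(k,\mathbf{g}(x))=-(K-1)\ell(k,\mathbf{g}(x))+\sum_{j=1}^K\ell(j,\mathbf{g}(x))$ and $\overline{R}(\mathbf{g};\overline{\ell})=\mathbb{E}_{(X,\overline{Y})\sim\overline{\mathcal{D}}}[\overline{\ell}(\overline{Y},\mathbf{g}(X))]$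 (which equals the classification risk $\mathbb{E}_{\mathcal{D}}[\ell(Y,\mathbf{g}(X))]$). Then there are non-negative constants $M_1,M_2$ with $\sum_{\overline{y}=1}^K\overline{\ell}_{c}(\overline{y},\mathbf{g}(x))=M_1$ for all $x$ and $\overline{\ell}_{c}(\overline{y},\mathbf{g}(x))+\ell(\overline{y},\mathbf{g}(x))=M_2$ for all $x,\overline{y}$, and $$\overline{R}(\mathbf{g};\overline{\ell})=(K-1)\,\mathbb{E}_{(X,\overline{Y})\sim\overline{\mathcal{D}}}\big[\overline{\ell}_{c}(\overline{Y},\mathbf{g}(X))\big]-M_1+M_2.$$
   Context: $\mathbf{g}_k(x)$ denotes the $k$-th coordinate of $\mathbf{g}(x)$. The losses labelled OVA and PC are the one-versus-all and pairwise-comparison multi-class losses; $\overline{\ell}_c$ denotes their complementary-label versions (the paper writes these also as $\overline{\ell}$, with the same symbol as the loss built from $\ell$; here they are distinguished by the subscript $c$). *)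

From HB Require Import structures.
From mathcomp Require Import all_boot all_order all_algebra.
From mathcomp Require Import all_classical all_reals all_analysis.
Set Implicit Arguments. Unset Strict Implicit. Unset Printing Implicit Defensive.
Import Order.TTheory GRing.Theory Num.Theory.
Local Open Scope ring_scope.

Inductive loss_kind := OVA | PC.

Section Losses.
Variables (R : realType) (K : nat) (s : R -> R).

(* ell(k, v) with v = g(x) in R^K, labels [K] = 'I_K *)
Definition ell (lk : loss_kind) (k : 'I_K) (v : 'I_K -> R) : R :=
  match lk with
  | OVA => s (v k) + (K.-1)%:R^-1 * \sum_(k' < K | k' != k) s (- v k')
  | PC => \sum_(k' < K | k' != k) s (v k - v k')
  end.

Definition ellc (lk : loss_kind) (kb : 'I_K) (v : 'I_K -> R) : R :=
  match lk with
  | OVA => (K.-1)%:R^-1 * \sum_(k < K | k != kb) s (v k) + s (- v kb)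
  | PC => \sum_(k' < K | k' != kb) s (v k' - v kb)
  end.

Definition ellbar (lk : loss_kind) (k : 'I_K) (v : 'I_K -> R) : R :=
  - (K.-1)%:R * ell lk k v + \sum_(j < K) ell lk j v.

Definition Tmat : 'M[R]_K :=
  \matrix_(i < K, j < K) (if i == j then 0 else (K.-1)%:R^-1).
End Losses.

(* P(Ybar = k | X = x) = (T P(Y = . | X = x))_k *)
Definition etabar (R : realType) (K : nat) (T : Type) (eta : T -> 'I_K -> R)
  (x : T) (k : 'I_K) : R :=
  \sum_(j < K) Tmat R K k j * eta x j.

(* A joint law of (X, Y) on T x [K] is given by the marginal law P of X and
   the class-conditional probabilities p x k = P(Y = k | X = x).
   Expectation of f(X, Y) under that joint law. *)
Definition joint_expect d (T : measurableType d) (R : realType) (K : nat)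
  (P : probability T R) (p : T -> 'I_K -> R) (f : T -> 'I_K -> R) : \bar R :=
  (\int[P]_x (\sum_(k < K) p x k * f x k)%:E)%E.

From HB Require Import structures.
From mathcomp Require Import all_boot all_order all_algebra.
From mathcomp Require Import all_classical all_reals all_analysis.
From mathcomp Require Import measurable_realfun lra ring.
Import Order.TTheory GRing.Theory Num.Theory.
Local Open Scope ring_scope.
Set Implicit Arguments.
Unset Strict Implicit.

(* Since s z + s (-z) = 1, pairing each term of the complementary loss with
   the matching term of the ordinary loss makes ell + ellc a constant M2, and
   summing ellc over all labels gives a constant M1.  Hence ellbar is the
   affine image (K-1) ellc - M1 + M2 of ellc, and the risk identity follows by
   linearity of the expectation, the conditional law of the complementary
   label being a probability vector. *)

Section FiniteSums.
Variables (R : realType) (K : nat).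
Hypothesis K_ge2 : (2 <= K)%N.

Lemma predK_neq0 : K.-1%:R != 0 :> R.
Proof. by rewrite pnatr_eq0 -lt0n; case: K K_ge2 => [|[|]]. Qed.

Lemma natr_predK : K%:R = K.-1%:R + 1 :> R.
Proof. by rewrite natr1 prednK // ltnW. Qed.

Lemma sumr_neq1 (i : 'I_K) : \sum_(j < K | j != i) (1 : R) = K.-1%:R.
Proof. by rewrite sumr_const cardC1 card_ord. Qed.

Lemma sumr_offdiag (F : 'I_K -> R) :
  \sum_(i < K) \sum_(j < K | j != i) F j = K.-1%:R * \sum_(j < K) F j.
Proof.
rewrite (exchange_big_dep xpredT) //= mulr_sumr; apply: eq_bigr => j _.
rewrite (eq_bigl (predC1 j)) => [|i]; last by rewrite /= eq_sym.
by rewrite sumr_const cardC1 card_ord mulr_natl.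
Qed.

End FiniteSums.

Section ComplementaryLabelLaw.
Variables (R : realType) (K : nat) (T : Type) (eta : T -> 'I_K -> R).
Hypothesis K_ge2 : (2 <= K)%N.
Hypothesis eta_ge0 : forall x k, 0 <= eta x k.
Hypothesis sum_eta : forall x, \sum_(k < K) eta x k = 1.

Lemma Tmat_ge0 i j : 0 <= Tmat R K i j.
Proof. by rewrite mxE; case: eqP. Qed.

Lemma sum_Tmat_col j : \sum_(i < K) Tmat R K i j = 1.
Proof.
rewrite (bigD1 j) //= mxE eqxx add0r.
rewrite (eq_bigr (fun=> K.-1%:R^-1 * 1)) => [|i /negbTE ij]; last first.
  by rewrite mxE ij mulr1.
by rewrite -mulr_sumr sumr_neq1 mulVf ?(predK_neq0 R K_ge2).
Qed.

Lemma etabar_ge0 x k : 0 <= etabar eta x k.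
Proof. by apply: sumr_ge0 => j _; rewrite mulr_ge0 ?Tmat_ge0. Qed.

Lemma sum_etabar x : \sum_(k < K) etabar eta x k = 1.
Proof.
rewrite /etabar exchange_big -[RHS](sum_eta x) /=; apply: eq_bigr => j _.
by rewrite -mulr_suml sum_Tmat_col // mul1r.
Qed.

End ComplementaryLabelLaw.

Section Losses.
Variables (R : realType) (K : nat) (s : R -> R).
Hypothesis K_ge2 : (2 <= K)%N.
Hypothesis s_ge0 : forall z, 0 <= s z.
Hypothesis s_sym : forall z, s z + s (- z) = 1.

Definition loss_M1 lk : R :=
  match lk with OVA => K%:R | PC => K%:R * K.-1%:R / 2 end.
Definition loss_M2 lk : R := match lk with OVA => 2 | PC => K.-1%:R end.

Lemma loss_M1_ge0 lk : 0 <= loss_M1 lk.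
Proof. by case: lk => //=; rewrite divr_ge0 ?mulr_ge0. Qed.

Lemma loss_M2_ge0 lk : 0 <= loss_M2 lk.
Proof. by case: lk. Qed.

Lemma ell_ge0 lk k (v : 'I_K -> R) : 0 <= ell s lk k v.
Proof. by case: lk => /=; rewrite ?addr_ge0 ?mulr_ge0 ?invr_ge0 ?sumr_ge0. Qed.

Lemma ellcDell lk k (v : 'I_K -> R) : ellc s lk k v + ell s lk k v = loss_M2 lk.
Proof.
case: lk => /=; last first.
  rewrite -big_split -(sumr_neq1 R k); apply: eq_bigr => j _ /=.
  by rewrite -[v k - v j]opprB s_sym.
have pair_sum : \sum_(j < K | j != k) s (v j) + \sum_(j < K | j != k) s (- v j)
    = K.-1%:R.
  by rewrite -big_split -(sumr_neq1 R k); apply: eq_bigr => j _; apply: s_sym.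
have := s_sym (v k); have := congr1 ( *%R K.-1%:R^-1) pair_sum.
by rewrite mulrDr mulVf ?(predK_neq0 R K_ge2) //; lra.
Qed.

Lemma normr_ellc_le_M2 lk k (v : 'I_K -> R) : `|ellc s lk k v| <= loss_M2 lk.
Proof.
have ellc_ge0 : 0 <= ellc s lk k v.
  by case: lk => /=; rewrite ?addr_ge0 ?mulr_ge0 ?invr_ge0 ?sumr_ge0.
by rewrite ger0_norm // -(ellcDell lk k v) lerDl ell_ge0.
Qed.

Lemma sum_ellc lk (v : 'I_K -> R) : \sum_(k < K) ellc s lk k v = loss_M1 lk.
Proof.
case: lk => /=.
  rewrite big_split /= -mulr_sumr sumr_offdiag mulrA.
  rewrite mulVf ?(predK_neq0 R K_ge2) // mul1r.
  by rewrite -big_split /= (eq_bigr (fun=> 1)) // sumr_const card_ord.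
set S := \sum_(k < K) _.
(* each unordered pair {j, k} contributes s (v j - v k) + s (v k - v j) = 1 *)
have S_swap : S = \sum_(k < K) \sum_(j < K | j != k) s (v k - v j).
  rewrite /S (exchange_big_dep xpredT) //=.
  by apply: eq_bigr => k _; apply: eq_bigl => j; rewrite eq_sym.
have : S + S = K%:R * K.-1%:R.
  rewrite {2}S_swap -big_split (eq_bigr (fun=> K.-1%:R)) => [|k _].
    by rewrite sumr_const card_ord mulr_natl.
  rewrite -big_split -(sumr_neq1 R k); apply: eq_bigr => j _ /=.
  by rewrite -[v k - v j]opprB s_sym.
lra.
Qed.

Lemma ellbarE lk k (v : 'I_K -> R) :
  ellbar s lk k v = K.-1%:R * ellc s lk k v + (loss_M2 lk - loss_M1 lk).
Proof.
have ellE j : ell s lk j v = loss_M2 lk - ellc s lk j v.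
  by rewrite -(ellcDell lk j v) addrAC subrr add0r.
rewrite /ellbar ellE; under eq_bigr do rewrite ellE.
rewrite sumrB sum_ellc sumr_const card_ord -[_ *+ K]mulr_natl.
by rewrite (natr_predK R K_ge2); ring.
Qed.

End Losses.

Section Measurability.
Variables (d : measure_display) (T : measurableType d) (R : realType) (K : nat).

Lemma measurable_sum_cond (P : pred 'I_K) (h : 'I_K -> T -> R) :
  (forall i, measurable_fun setT (h i)) ->
  measurable_fun setT (fun x => \sum_(i < K | P i) h i x).
Proof.
move=> mh; under eq_fun do rewrite big_mkcond /=.
by apply: measurable_sum => i; case: (P i) => //; apply: measurable_cst.
Qed.

Lemma measurable_etabar (eta : T -> 'I_K -> R) k :
  (forall j, measurable_fun setT (eta^~ j)) ->
  measurable_fun setT (etabar eta ^~ k).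
Proof.
by move=> meta; apply: measurable_sum => j; apply: measurable_funM.
Qed.

Lemma measurable_ellc (s : R -> R) lk k (g : T -> 'I_K -> R) :
  measurable_fun setT s -> (forall j, measurable_fun setT (g^~ j)) ->
  measurable_fun setT (fun x => ellc s lk k (g x)).
Proof.
move=> ms mg; case: lk => /=.
  apply: measurable_funD.
    apply: measurable_funM => //.
    by apply: measurable_sum_cond => j; apply: measurableT_comp.
  by apply: measurableT_comp => //; apply: measurable_funN.
apply: measurable_sum_cond => j.
by apply: measurableT_comp => //; apply: measurable_funB.
Qed.

End Measurability.

Section JointExpectation.
Variables (d : measure_display) (T : measurableType d) (R : realType) (K : nat).
Variables (P : probability T R) (p : T -> 'I_K -> R).
Hypothesis p_ge0 : forall x k, 0 <= p x k.
Hypothesis sum_p : forall x, \sum_(k < K) p x k = 1.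
Hypothesis mp : forall k, measurable_fun setT (p^~ k).
Variables (h : T -> 'I_K -> R) (M : R).
Hypothesis mh : forall k, measurable_fun setT (h^~ k).
Hypothesis h_bounded : forall x k, `|h x k| <= M.

Let cond_expect x := \sum_(k < K) p x k * h x k.

Lemma integrable_cond_expect : P.-integrable setT (EFin \o cond_expect).
Proof.
apply: (@le_integrable _ _ _ _ _ _ _ (EFin \o cst M)) => //.
- by apply/measurable_EFinP; apply: measurable_sum => k; apply: measurable_funM.
- move=> x _; rewrite /= lee_fin (le_trans _ (ler_norm M)) //.
  rewrite (le_trans (ler_norm_sum _ _ _)) // -[M]mul1r -(sum_p x) mulr_suml.
  by apply: ler_sum => k _; rewrite normrM ger0_norm // ler_wpM2l.
- exact: finite_measure_integrable_cst.
Qed.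

Lemma joint_expect_fin_num : joint_expect P p h \is a fin_num.
Proof. exact: integrable_fin_num integrable_cond_expect. Qed.

Lemma joint_expect_affine a c :
  joint_expect P p (fun x k => a * h x k + c) =
  (a%:E * joint_expect P p h + c%:E)%E.
Proof.
have cond_expect_affine x :
    \sum_(k < K) p x k * (a * h x k + c) = a * cond_expect x + c.
  rewrite mulr_sumr -[c in RHS]mulr1 -(sum_p x) mulr_sumr -big_split.
  by apply: eq_bigr => k _ /=; ring.
rewrite /joint_expect (eq_integral
  (fun x => (EFin \o (fun x => (a * cond_expect x)%R)) x + (EFin \o cst c) x)%E);
  last by move=> x _; rewrite cond_expect_affine.
rewrite integralD_EFin //; last first.
- exact: finite_measure_integrable_cst.
- exact: integrableZl integrable_cond_expect.
rewrite (eq_integral (fun x => a%:E * (EFin \o cond_expect) x)%E) //.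
have -> : (\int[P]_x (EFin \o cst c) x = c%:E)%E.
  rewrite (eq_integral (cst c%:E)) // integral_cst // -[RHS]mule1.
  by congr (_ * _)%E; apply: probability_setT.
by rewrite integralZl ?integrable_cond_expect.
Qed.

End JointExpectation.

Theorem corollary2 (R : realType) (K : nat) (d : measure_display)
  (T : measurableType d) (P : probability T R) (eta : T -> 'I_K -> R)
  (g : T -> 'I_K -> R) (s : R -> R) (lk : loss_kind) :
  (2 <= K)%N ->
  (forall x k, 0 <= eta x k) ->
  (forall x, \sum_(k < K) eta x k = 1) ->
  (forall k, measurable_fun setT (fun x => eta x k)) ->
  (forall k, measurable_fun setT (fun x => g x k)) ->
  measurable_fun setT s ->
  (forall z, 0 <= s z) ->
  (forall z, s z + s (- z) = 1) ->
  exists M1 M2 : R, 0 <= M1 /\ 0 <= M2 /\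
    (forall x, \sum_(yb < K) ellc (K:=K) s lk yb (g x) = M1) /\
    (forall x yb, ellc (K:=K) s lk yb (g x) + ell (K:=K) s lk yb (g x) = M2) /\
    joint_expect P (etabar eta) (fun x k => ellbar (K:=K) s lk k (g x)) =
      ((K.-1)%:R%:E * joint_expect P (etabar eta) (fun x k => ellc (K:=K) s lk k (g x))
        - M1%:E + M2%:E)%E.
Proof.
move=> K_ge2 eta_ge0 sum_eta meta mg ms s_ge0 s_sym.
exists (loss_M1 R K lk), (loss_M2 R K lk).
do 2 (split; first by rewrite ?loss_M1_ge0 ?loss_M2_ge0).
split; first by move=> x; apply: sum_ellc.
split; first by move=> x yb; apply: ellcDell.
have etab_ge0 := etabar_ge0 eta_ge0.
have sum_etab := sum_etabar K_ge2 sum_eta.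
have metab k := measurable_etabar k meta.
have mellc k := measurable_ellc lk k ms mg.
have ellc_bounded x k := normr_ellc_le_M2 K_ge2 s_ge0 s_sym lk k (g x).
have -> : (fun x k => ellbar s lk k (g x)) = (fun x k =>
    K.-1%:R * ellc s lk k (g x) + (loss_M2 R K lk - loss_M1 R K lk)).
  by apply/funext => x; apply/funext => k; apply: ellbarE.
rewrite (joint_expect_affine P etab_ge0 sum_etab metab mellc ellc_bounded).
rewrite -(fineK (joint_expect_fin_num P etab_ge0 sum_etab metab mellc ellc_bounded)).
by rewrite -EFinM -EFinB -!EFinD addrA addrAC.
Qed.
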